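(* Let $\nu>0$ and let $K\in\mathbb N$ be fixed, with index set $\mathcal K=\{(k_1,k_2)\in\mathbb Z^2\setminus\{0\}: -K\le k_1,k_2\le K\}$. Let $f$ be a real, $2\pi$-periodic, divergence-free, mean-zero body force on $[0,2\pi]^2$ whose Fourier coefficients vanish outside $\{k\in\mathcal K: |k|^2\le \lambda_M\}$ for some $\lambda_M\ge 1$. Let $g=\operatorname{curl} f$ with Fourier coefficients $g_k$, and set $\lambda_0=\min\{|k|^2:k\in\mathcal K\}=1$. For a real trigonometric polynomial $\omega(x)=\sum_{k\in\mathcal K}\omega_k e^{ik\cdot x}$ (so $\omega_{-k}=\overline{\omega_k}$) define $u(x)=\sum_{k\in\mathcal K}\frac{i(k_2,-k_1)}{|k|^2}\omega_k e^{ik\cdot x}$ and $|\omega|^2=\|\omega\|_{L^2}^2=4\pi^2\sum_{k\in\mathcal K}|\omega_k|^2$. For a time step $h>0$ define the map $S$ by $$S(\omega)_k=\big\{\omega_k-h\,(u\cdot\nabla\omega)_k\big\}e^{-\nu|k|^2h}+\frac{2g_k}{\nu|k|^2}e^{-\nu|k|^2h/2}\sinh(\nu|k|^2h/2),\qquad k\in\mathcal K,$$ where $(u\cdot\nabla\omega)_k$ denotes the $k$-th Fourier coefficient of $u\cdot\nabla\omega$ (only $k\in\mathcal K$ are retained), and let $\omega^{n+1}=S(\omega^n)$ for $n=0,1,2,\dots$. Let $$B=c_0\frac{\|f\|_{L^2}}{\nu\lambda_0^{1/2}}\qquad\text{with}\qquad c_0>6\lambda_M/\lambda_0 .$$ Then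 for every $L>0$ there exist $h>0$ sufficiently small and $N\in\mathbb N$ sufficiently large (depending on $L$, $K$, $\nu$, $\lambda_M$, $c_0$, $f$) such that for every initial datum $\omega^0$ with $|\omega^0|<L$ one has $|\omega^n|<B$ for all $n\ge N$.
   Context: This is a fully dealiased spectral Galerkin discretization of the two-dimensional incompressible Navier–Stokes equations in vorticity form $\partial_t\omega-\nu\Delta\omega+u\cdot\nabla\omega=g$ on the $2\pi$-periodic box, with linear terms integrated exactly in time and the nonlinear term by the forward Euler method. Here $\operatorname{curl}u=\partial u_2/\partial x_1-\partial u_1/\partial x_2$. *)

From Stdlib Require Import Reals Lra ZArith List Bool.
Open Scope R_scope.

Definition C := (R * R)%type.
Definition C0 : C := (0, 0).
Definition Ci : C := (0, 1).
Definition Cadd (a b : C) : C := (fst a + fst b, snd a + snd b).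
Definition Cmul (a b : C) : C :=
  (fst a * fst b - snd a * snd b, fst a * snd b + snd a * fst b).
Definition Cscale (r : R) (a : C) : C := (r * fst a, r * snd a).
Definition Cconj (a : C) : C := (fst a, - snd a).
Definition Cnorm2 (a : C) : R := fst a ^ 2 + snd a ^ 2.

Definition wv := (Z * Z)%type.
Definition wneg (k : wv) : wv := ((- fst k)%Z, (- snd k)%Z).
Definition ksq (k : wv) : R := IZR (fst k) ^ 2 + IZR (snd k) ^ 2.

Definition zrange (K : nat) : list Z :=
  map (fun n => (Z.of_nat n - Z.of_nat K)%Z) (seq 0 (2 * K + 1)).
Definition idx (K : nat) : list wv :=
  filter (fun k => negb (Z.eqb (fst k) 0 && Z.eqb (snd k) 0))
         (list_prod (zrange K) (zrange K)).

Definition Csum (l : list wv) (F : wv -> C) : C :=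
  fold_right (fun k acc => Cadd (F k) acc) C0 l.
Definition Rsum (l : list wv) (F : wv -> R) : R :=
  fold_right (fun k acc => F k + acc) 0 l.

(** Scalar fields (vorticity) by Fourier coefficients  w(x) = sum_k w_k e^{ik.x};
    vector fields (force) by pairs of coefficients. *)
Definition sfield := wv -> C.
Definition vfield := wv -> (C * C)%type.

Definition real_sfield (K : nat) (w : sfield) : Prop :=
  forall k, In k (idx K) -> w (wneg k) = Cconj (w k).

Definition snorm (K : nat) (w : sfield) : R :=
  sqrt (4 * PI ^ 2 * Rsum (idx K) (fun k => Cnorm2 (w k))).

(** ||f||_{L^2} (f is supported in the index set) *)
Definition vnorm (K : nat) (f : vfield) : R :=
  sqrt (4 * PI ^ 2 * Rsum (idx K) (fun k => Cnorm2 (fst (f k)) + Cnorm2 (snd (f k)))).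

Definition force_ok (K : nat) (lamM : R) (f : vfield) : Prop :=
  (forall k, f (wneg k) = (Cconj (fst (f k)), Cconj (snd (f k)))) /\
  (forall k, Cadd (Cscale (IZR (fst k)) (fst (f k)))
                  (Cscale (IZR (snd k)) (snd (f k))) = C0) /\
  f (0%Z, 0%Z) = (C0, C0) /\
  (forall k, ~ (In k (idx K) /\ ksq k <= lamM) -> f k = (C0, C0)).

(** g = curl f = d f2/dx1 - d f1/dx2 :  g_k = i k1 (f2)_k - i k2 (f1)_k *)
Definition curl (f : vfield) : sfield :=
  fun k => Cadd (Cmul Ci (Cscale (IZR (fst k)) (snd (f k))))
                (Cscale (-1) (Cmul Ci (Cscale (IZR (snd k)) (fst (f k))))).

Definition uhat (w : sfield) (j : wv) : (C * C)%type :=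
  (Cmul Ci (Cscale (IZR (snd j) / ksq j) (w j)),
   Cmul Ci (Cscale (- IZR (fst j) / ksq j) (w j))).
Definition gradhat (w : sfield) (l : wv) : (C * C)%type :=
  (Cmul Ci (Cscale (IZR (fst l)) (w l)), Cmul Ci (Cscale (IZR (snd l)) (w l))).

(** k-th Fourier coefficient of u . grad omega (product of two trigonometric
    polynomials over the index set, i.e. convolution of coefficients). *)
Definition advect (K : nat) (w : sfield) (k : wv) : C :=
  Csum (idx K) (fun j => Csum (idx K) (fun l =>
    if andb (Z.eqb (fst j + fst l)%Z (fst k)) (Z.eqb (snd j + snd l)%Z (snd k))
    then Cadd (Cmul (fst (uhat w j)) (fst (gradhat w l)))
              (Cmul (snd (uhat w j)) (snd (gradhat w l)))
    else C0)).

Definition Sstep (nu h : R) (K : nat) (g : sfield) (w : sfield) : sfield :=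
  fun k =>
    Cadd (Cscale (exp (- nu * ksq k * h)) (Cadd (w k) (Cscale (- h) (advect K w k))))
         (Cscale (2 / (nu * ksq k) * exp (- nu * ksq k * h / 2) * sinh (nu * ksq k * h / 2))
                 (g k)).

(** lambda_0 = min {|k|^2 : k in K} = 1 *)
Definition lambda0 : R := 1.

(* Energy method for E(w) = sum_k |w_k|^2.  Each mode is damped by at least
   1 / (1 + nu h), and the nonlinear term is orthogonal to w (on the triads
   j + l + m = 0 the coefficient of w_m w_j w_l is antisymmetric in m and l), so
   Young's inequality gives
     E(S w) <= (E(w) + h^2 E(u.grad w)) / (1 + nu h) + (h^2 + h/nu) lamM |f|^2.
   On the finite index set E(u.grad w) <= C_K E(w)^2, hence on a ball E <= R0 and
   for h small compared with R0 this is a contraction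
     E(S w) <= rho E(w) + (1 - rho) F,  rho = 1 - nu h / 4,  F = 8 lamM |f|^2 / nu^2.
   The ball is invariant and E falls below any level above F after a number of
   steps independent of w0; since c0 > 6 lamM the level (c0 / nu)^2 |f|^2, which
   corresponds to |w| < B, is such a level.  Taking R0 = L^2 / (4 PI^2) plus that
   level covers all initial data with |w0| < L. *)

From Stdlib Require Import Reals Lra Lia ZArith List Permutation.
Open Scope R_scope.

Lemma In_zrange K z : In z (zrange K) <-> (- Z.of_nat K <= z <= Z.of_nat K)%Z.
Proof.
  unfold zrange; rewrite in_map_iff; split.
  - intros [n [<- Hn]]. apply in_seq in Hn. lia.
  - intros Hz. exists (Z.to_nat (z + Z.of_nat K)). split.
    + rewrite Z2Nat.id; lia.
    + apply in_seq. lia.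
Qed.

Lemma In_idx K k : In k (idx K) <->
  (- Z.of_nat K <= fst k <= Z.of_nat K)%Z /\ (- Z.of_nat K <= snd k <= Z.of_nat K)%Z
  /\ ~ (fst k = 0%Z /\ snd k = 0%Z).
Proof.
  destruct k as [a b]. unfold idx. rewrite filter_In.
  rewrite (in_prod_iff (zrange K) (zrange K) a b), !In_zrange. simpl.
  destruct (Z.eqb_spec a 0), (Z.eqb_spec b 0); simpl; intuition congruence.
Qed.

Lemma NoDup_list_prod {A B} (l : list A) (l' : list B) :
  NoDup l -> NoDup l' -> NoDup (list_prod l l').
Proof.
  induction 1 as [|a l Ha Hl IH]; intros Hl'; simpl; [constructor|].
  apply NoDup_app; auto.
  - apply FinFun.Injective_map_NoDup; auto. intros x y E; now inversion E.
  - intros [x y] H1 H2. apply in_map_iff in H1. destruct H1 as [z [E _]].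
    inversion E; subst. apply in_prod_iff in H2. tauto.
Qed.

Lemma NoDup_idx K : NoDup (idx K).
Proof.
  apply NoDup_filter, NoDup_list_prod; apply FinFun.Injective_map_NoDup;
    try apply seq_NoDup; intros x y E; lia.
Qed.

Lemma wneg_involutive k : wneg (wneg k) = k.
Proof. destruct k; unfold wneg; simpl; f_equal; lia. Qed.

Lemma In_idx_wneg K k : In k (idx K) -> In (wneg k) (idx K).
Proof. rewrite !In_idx; destruct k; simpl; lia. Qed.

Lemma Permutation_wneg_idx K : Permutation (map wneg (idx K)) (idx K).
Proof.
  apply NoDup_Permutation; [|apply NoDup_idx|].
  - apply FinFun.Injective_map_NoDup; [|apply NoDup_idx].
    intros x y E. now rewrite <- (wneg_involutive x), E, wneg_involutive.
  - intros x; rewrite in_map_iff; split.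
    + intros [y [<- Hy]]. now apply In_idx_wneg.
    + intros Hx. exists (wneg x). split; [apply wneg_involutive|now apply In_idx_wneg].
Qed.

Lemma ksq_wneg k : ksq (wneg k) = ksq k.
Proof. unfold ksq, wneg; simpl. rewrite !opp_IZR. ring. Qed.

Lemma ksq_ge_1 K k : In k (idx K) -> 1 <= ksq k.
Proof.
  rewrite In_idx. destruct k as [a b]; simpl. intros (_ & _ & Hk).
  unfold ksq; cbn [fst snd]. replace (IZR a ^ 2 + IZR b ^ 2) with (IZR (a * a + b * b))
    by (rewrite plus_IZR, !mult_IZR; ring).
  apply IZR_le. nia.
Qed.

Lemma Rsum_ext_in l F G : (forall x, In x l -> F x = G x) -> Rsum l F = Rsum l G.
Proof. induction l; simpl; intros H; auto. rewrite H, IHl; auto. Qed.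

Lemma Rsum_zero l F : (forall x, In x l -> F x = 0) -> Rsum l F = 0.
Proof. induction l; simpl; intros H; auto. rewrite H, IHl; auto; ring. Qed.

Lemma Rsum_plus l F G : Rsum l (fun x => F x + G x) = Rsum l F + Rsum l G.
Proof. induction l; simpl; [ring|]. rewrite IHl; ring. Qed.

Lemma Rsum_scal l c F : Rsum l (fun x => c * F x) = c * Rsum l F.
Proof. induction l; simpl; [ring|]. rewrite IHl; ring. Qed.

Lemma Rsum_opp l F : Rsum l (fun x => - F x) = - Rsum l F.
Proof. induction l; simpl; [ring|]. rewrite IHl; ring. Qed.

Lemma Rsum_le l F G : (forall x, In x l -> F x <= G x) -> Rsum l F <= Rsum l G.
Proof.
  induction l; simpl; intros H; [lra|].
  apply Rplus_le_compat; auto.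
Qed.

Lemma Rsum_nonneg l F : (forall x, In x l -> 0 <= F x) -> 0 <= Rsum l F.
Proof.
  intros H. replace 0 with (Rsum l (fun _ => 0)) by (apply Rsum_zero; auto).
  now apply Rsum_le.
Qed.

Lemma Rsum_term_le l F x : (forall y, In y l -> 0 <= F y) -> In x l -> F x <= Rsum l F.
Proof.
  induction l; simpl; intros H Hx; [tauto|].
  destruct Hx as [<-|Hx].
  - assert (0 <= Rsum l F) by (apply Rsum_nonneg; auto). lra.
  - assert (F x <= Rsum l F) by auto. specialize (H a (or_introl eq_refl)). lra.
Qed.

Lemma Rsum_abs l F : Rabs (Rsum l F) <= Rsum l (fun x => Rabs (F x)).
Proof.
  induction l; simpl; [rewrite Rabs_R0; lra|].
  eapply Rle_trans; [apply Rabs_triang|lra].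
Qed.

Lemma Rsum_le_const l F c : (forall x, In x l -> F x <= c) -> Rsum l F <= INR (length l) * c.
Proof.
  induction l; intros H; [simpl; lra|].
  change (length (a :: l)) with (S (length l)). rewrite S_INR. simpl.
  specialize (IHl (fun x Hx => H x (or_intror Hx))). specialize (H a (or_introl eq_refl)).
  lra.
Qed.

Lemma Rsum_exchange (l1 l2 : list wv) F :
  Rsum l1 (fun x => Rsum l2 (fun y => F x y)) = Rsum l2 (fun y => Rsum l1 (fun x => F x y)).
Proof.
  induction l1; simpl.
  - symmetry. now apply Rsum_zero.
  - now rewrite IHl1, <- Rsum_plus.
Qed.

Lemma Rsum2_linear l a b F G :
  a * Rsum l (fun x => Rsum l (fun y => F x y)) + b * Rsum l (fun x => Rsum l (fun y => G x y))
  = Rsum l (fun x => Rsum l (fun y => a * F x y + b * G x y)).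
Proof.
  rewrite <- !Rsum_scal, <- Rsum_plus. apply Rsum_ext_in; intros x _.
  now rewrite <- !Rsum_scal, <- Rsum_plus.
Qed.

Lemma Rsum_antisym_zero l F : (forall x y, F y x = - F x y) ->
  Rsum l (fun x => Rsum l (fun y => F x y)) = 0.
Proof.
  intros Hanti.
  assert (E : Rsum l (fun x => Rsum l (fun y => F x y))
              = - Rsum l (fun x => Rsum l (fun y => F x y))).
  { rewrite Rsum_exchange at 1. rewrite <- Rsum_opp. apply Rsum_ext_in; intros y _.
    rewrite <- Rsum_opp. apply Rsum_ext_in; intros x _. exact (Hanti y x). }
  lra.
Qed.

Lemma Rsum_Permutation l1 l2 F : Permutation l1 l2 -> Rsum l1 F = Rsum l2 F.
Proof. induction 1; simpl; auto; lra. Qed.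

Lemma Rsum_map g l F : Rsum (map g l) F = Rsum l (fun x => F (g x)).
Proof. induction l; simpl; auto. now rewrite IHl. Qed.

Lemma Rsum_wneg K F : Rsum (idx K) (fun k => F (wneg k)) = Rsum (idx K) F.
Proof. rewrite <- Rsum_map. apply Rsum_Permutation, Permutation_wneg_idx. Qed.

Lemma Rsum2_wneg K F :
  Rsum (idx K) (fun j => Rsum (idx K) (fun l => F (wneg j) (wneg l))) =
  Rsum (idx K) (fun j => Rsum (idx K) (fun l => F j l)).
Proof.
  rewrite <- (Rsum_wneg K (fun j => Rsum (idx K) (fun l => F j l))).
  apply Rsum_ext_in; intros j _. apply (Rsum_wneg K (fun l => F (wneg j) l)).
Qed.

Lemma Csum_components l F :
  Csum l F = (Rsum l (fun k => fst (F k)), Rsum l (fun k => snd (F k))).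
Proof. induction l; simpl; auto. now rewrite IHl. Qed.

Definition advect_symbol (j l : wv) : R :=
  (IZR (fst j) * IZR (snd l) - IZR (snd j) * IZR (fst l)) / ksq j.

Definition conv_ind (j l k : wv) : R :=
  if andb (Z.eqb (fst j + fst l)%Z (fst k)) (Z.eqb (snd j + snd l)%Z (snd k)) then 1 else 0.

Lemma advect_term w j l :
  Cadd (Cmul (fst (uhat w j)) (fst (gradhat w l))) (Cmul (snd (uhat w j)) (snd (gradhat w l)))
  = Cscale (advect_symbol j l) (Cmul (w j) (w l)).
Proof.
  unfold uhat, gradhat, advect_symbol, Cadd, Cmul, Cscale, Ci; simpl.
  destruct (w j) as [a b], (w l) as [c d]; simpl. f_equal; unfold Rdiv; ring.
Qed.

Lemma advect_components K w k : advect K w k =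
  (Rsum (idx K) (fun j => Rsum (idx K) (fun l =>
     conv_ind j l k * advect_symbol j l * fst (Cmul (w j) (w l)))),
   Rsum (idx K) (fun j => Rsum (idx K) (fun l =>
     conv_ind j l k * advect_symbol j l * snd (Cmul (w j) (w l))))).
Proof.
  unfold advect. rewrite Csum_components. f_equal; apply Rsum_ext_in; intros j _;
    rewrite Csum_components; apply Rsum_ext_in; intros l _;
    unfold conv_ind; destruct andb; try rewrite advect_term; simpl; ring.
Qed.

Lemma conv_ind_wneg j l k : conv_ind (wneg j) (wneg l) (wneg k) = conv_ind j l k.
Proof.
  unfold conv_ind, wneg; simpl.
  destruct (Z.eqb_spec (fst j + fst l) (fst k)), (Z.eqb_spec (snd j + snd l) (snd k));
  destruct (Z.eqb_spec (- fst j + - fst l) (- fst k)), (Z.eqb_spec (- snd j + - snd l) (- snd k));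
  simpl; auto; lia.
Qed.

Lemma advect_symbol_wneg j l : advect_symbol (wneg j) (wneg l) = advect_symbol j l.
Proof.
  unfold advect_symbol. rewrite ksq_wneg. unfold wneg; simpl. rewrite !opp_IZR.
  unfold Rdiv; ring.
Qed.

Lemma advect_wneg K w k : real_sfield K w -> advect K w (wneg k) = Cconj (advect K w k).
Proof.
  intros Hw. rewrite !advect_components. unfold Cconj; cbn [fst snd].
  f_equal; [|rewrite <- Rsum_opp]; rewrite <- Rsum2_wneg; apply Rsum_ext_in; intros j Hj;
    [|rewrite <- Rsum_opp]; apply Rsum_ext_in; intros l Hl;
    rewrite conv_ind_wneg, advect_symbol_wneg, (Hw j Hj), (Hw l Hl);
    unfold Cconj, Cmul; simpl; ring.
Qed.

Definition Cdot (a b : C) : R := fst a * fst b + snd a * snd b.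

Definition triad (w : sfield) (m j l : wv) : R :=
  conv_ind j l (wneg m) * advect_symbol j l * fst (Cmul (w m) (Cmul (w j) (w l))).

(* Incompressibility: on the resonant set [j + l + m = 0] we have
   [j x m = - j x l] because [j x j = 0]. *)
Lemma triad_antisym w m j l : triad w l j m = - triad w m j l.
Proof.
  unfold triad, conv_ind, wneg; simpl.
  destruct (Z.eqb_spec (fst j + fst m) (- fst l)), (Z.eqb_spec (snd j + snd m) (- snd l));
  destruct (Z.eqb_spec (fst j + fst l) (- fst m)), (Z.eqb_spec (snd j + snd l) (- snd m));
  simpl; try ring; try lia.
  assert (E1 : fst m = (- (fst j + fst l))%Z) by lia.
  assert (E2 : snd m = (- (snd j + snd l))%Z) by lia.
  unfold advect_symbol. rewrite E1, E2, !opp_IZR, !plus_IZR.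
  destruct (w m) as [a b], (w j) as [c d], (w l) as [p q]; unfold Cmul; simpl.
  unfold Rdiv; ring.
Qed.

Lemma advect_orthogonal K w : real_sfield K w ->
  Rsum (idx K) (fun k => Cdot (w k) (advect K w k)) = 0.
Proof.
  intros Hw.
  transitivity (Rsum (idx K) (fun k =>
    Rsum (idx K) (fun j => Rsum (idx K) (fun l => triad w (wneg k) j l)))).
  - apply Rsum_ext_in; intros k Hk.
    rewrite advect_components. unfold Cdot; cbn [fst snd]. rewrite Rsum2_linear.
    apply Rsum_ext_in; intros j _. apply Rsum_ext_in; intros l _.
    unfold triad. rewrite wneg_involutive, (Hw k Hk).
    unfold Cconj, Cmul; simpl; ring.
  - rewrite (Rsum_wneg K (fun m => Rsum (idx K) (fun j => Rsum (idx K) (fun l => triad w m j l)))).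
    rewrite Rsum_exchange. apply Rsum_zero; intros j _.
    apply (Rsum_antisym_zero (idx K) (fun m l => triad w m j l)). intros; apply triad_antisym.
Qed.

(* Both energies omit the factor [4 PI^2] of the L^2 norms [snorm] and [vnorm]. *)
Definition energy (K : nat) (w : sfield) : R := Rsum (idx K) (fun k => Cnorm2 (w k)).

Definition force_energy (K : nat) (f : vfield) : R :=
  Rsum (idx K) (fun k => Cnorm2 (fst (f k)) + Cnorm2 (snd (f k))).

Lemma Cnorm2_nonneg z : 0 <= Cnorm2 z.
Proof. unfold Cnorm2. pose proof (pow2_ge_0 (fst z)). pose proof (pow2_ge_0 (snd z)). lra. Qed.

Lemma Cnorm2_scale s z : Cnorm2 (Cscale s z) = s ^ 2 * Cnorm2 z.
Proof. unfold Cnorm2, Cscale; simpl. ring. Qed.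

Lemma Cnorm2_sub_scale a b h :
  Cnorm2 (Cadd a (Cscale (- h) b)) = Cnorm2 a - 2 * h * Cdot a b + h ^ 2 * Cnorm2 b.
Proof. unfold Cnorm2, Cadd, Cscale, Cdot; simpl. ring. Qed.

Lemma Rsqr_plus_le_weighted eps x y : 0 < eps ->
  (x + y) ^ 2 <= (1 + eps) * x ^ 2 + (1 + / eps) * y ^ 2.
Proof.
  intros He.
  assert (E : (1 + eps) * x ^ 2 + (1 + / eps) * y ^ 2 - (x + y) ^ 2 = (eps * x - y) ^ 2 / eps)
    by (field; lra).
  assert (0 <= (eps * x - y) ^ 2 / eps).
  { apply Rmult_le_pos; [apply pow2_ge_0|left; apply Rinv_0_lt_compat; auto]. }
  lra.
Qed.

Lemma Cnorm2_add_le_weighted eps a b : 0 < eps ->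
  Cnorm2 (Cadd a b) <= (1 + eps) * Cnorm2 a + (1 + / eps) * Cnorm2 b.
Proof.
  intros He. unfold Cnorm2, Cadd; simpl.
  pose proof (Rsqr_plus_le_weighted eps (fst a) (fst b) He).
  pose proof (Rsqr_plus_le_weighted eps (snd a) (snd b) He). lra.
Qed.

Lemma energy_nonneg K w : 0 <= energy K w.
Proof. apply Rsum_nonneg. intros; apply Cnorm2_nonneg. Qed.

Lemma Cnorm2_le_energy K w k : In k (idx K) -> Cnorm2 (w k) <= energy K w.
Proof. apply (Rsum_term_le _ (fun k => Cnorm2 (w k))). intros; apply Cnorm2_nonneg. Qed.

Lemma exp_decay_le nu h q : 0 < nu -> 0 < h -> 1 <= q -> exp (- nu * q * h) <= / (1 + nu * h).
Proof.
  intros Hn Hh Hq.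
  replace (- nu * q * h) with (- (nu * q * h)) by ring. rewrite exp_Ropp.
  assert (nu * h <= nu * q * h).
  { assert (0 <= nu * h * (q - 1)) by (apply Rmult_le_pos; nra). nra. }
  apply Rinv_le_contravar; [nra|].
  pose proof (exp_ineq1_le (nu * q * h)). lra.
Qed.

(* The weight equals [(1 - exp (- nu q h)) / (nu q)] and [1 - exp (- x) <= x]. *)
Lemma forcing_weight_bounds nu h q : 0 < nu -> 0 < h -> 1 <= q ->
  0 <= 2 / (nu * q) * exp (- nu * q * h / 2) * sinh (nu * q * h / 2) <= h.
Proof.
  intros Hn Hh Hq.
  assert (Hnq : 0 < nu * q) by nra.
  assert (E : 2 / (nu * q) * exp (- nu * q * h / 2) * sinh (nu * q * h / 2)
              = (1 - exp (- (nu * q * h))) / (nu * q)).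
  { set (x := nu * q * h / 2).
    replace (- nu * q * h / 2) with (- x) by (unfold x; field).
    replace (- (nu * q * h)) with (- x + - x) by (unfold x; field).
    assert (Hx : exp (- x) * exp x = 1)
      by (rewrite <- exp_plus, <- exp_0; f_equal; ring).
    unfold sinh. rewrite exp_plus, <- Hx. field; lra. }
  rewrite E.
  pose proof (exp_ineq1_le (- (nu * q * h))).
  assert (exp (- (nu * q * h)) <= 1).
  { rewrite <- exp_0. left. apply exp_increasing. nra. }
  split.
  - apply Rmult_le_pos; [lra|left; apply Rinv_0_lt_compat; auto].
  - apply (Rmult_le_reg_r (nu * q)); auto. unfold Rdiv.
    rewrite Rmult_assoc, Rinv_l by lra. nra.
Qed.

Lemma curl_wneg K lamM f k : force_ok K lamM f -> curl f (wneg k) = Cconj (curl f k).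
Proof.
  intros (Hreal & _). unfold curl. rewrite Hreal. unfold wneg; cbn [fst snd]. rewrite !opp_IZR.
  destruct (f k) as [[a b] [c d]]; unfold Cconj, Cadd, Cmul, Cscale, Ci; simpl. f_equal; ring.
Qed.

Lemma Cnorm2_curl_le K lamM f k : force_ok K lamM f -> In k (idx K) ->
  Cnorm2 (curl f k) <= lamM * (Cnorm2 (fst (f k)) + Cnorm2 (snd (f k))).
Proof.
  intros (_ & _ & _ & Hsupp) Hk.
  destruct (Rle_lt_dec (ksq k) lamM) as [Hl|Hl].
  - apply Rle_trans with (ksq k * (Cnorm2 (fst (f k)) + Cnorm2 (snd (f k)))).
    + unfold curl, ksq, Cnorm2, Cadd, Cmul, Cscale, Ci; simpl.
      destruct (f k) as [[a b] [c d]]; simpl.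
      set (u := IZR (fst k)); set (v := IZR (snd k)).
      pose proof (pow2_ge_0 (u * b + v * d)); pose proof (pow2_ge_0 (u * a + v * c)).
      ring_simplify. nra.
    + apply Rmult_le_compat_r; auto.
      pose proof (Cnorm2_nonneg (fst (f k))); pose proof (Cnorm2_nonneg (snd (f k))); lra.
  - unfold curl. rewrite Hsupp by (intros [_ H]; lra).
    unfold Cnorm2, Cadd, Cmul, Cscale, Ci, C0; simpl. apply Req_le; ring.
Qed.

Lemma Sstep_real nu h K lamM f w : force_ok K lamM f -> real_sfield K w ->
  real_sfield K (Sstep nu h K (curl f) w).
Proof.
  intros Hf Hw k Hk. unfold Sstep.
  rewrite ksq_wneg, (Hw k Hk), (advect_wneg K w k Hw), (curl_wneg K lamM f k Hf).
  destruct (w k) as [a b], (advect K w k) as [c d], (curl f k) as [e1 e2].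
  unfold Cconj, Cadd, Cscale; simpl. f_equal; ring.
Qed.

(* Young's inequality with weight [nu h]; the damping [exp (- nu |k|^2 h) <= 1 / (1 + nu h)]
   pays for the factor [1 + nu h] on the transported part. *)
Lemma Cnorm2_Sstep_le nu h K g w k : 0 < nu -> 0 < h -> In k (idx K) ->
  Cnorm2 (Sstep nu h K g w k) <=
  / (1 + nu * h) * Cnorm2 (Cadd (w k) (Cscale (- h) (advect K w k)))
  + (h ^ 2 + h / nu) * Cnorm2 (g k).
Proof.
  intros Hn Hh Hk. unfold Sstep.
  pose proof (ksq_ge_1 K k Hk) as Hq.
  set (s := exp (- nu * ksq k * h)).
  set (a := 2 / (nu * ksq k) * exp (- nu * ksq k * h / 2) * sinh (nu * ksq k * h / 2)).
  set (v := Cadd (w k) (Cscale (- h) (advect K w k))).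
  assert (Hnh : 0 < nu * h) by (apply Rmult_lt_0_compat; auto).
  eapply Rle_trans; [apply (Cnorm2_add_le_weighted (nu * h)); auto|].
  rewrite !Cnorm2_scale.
  assert (Hs : 0 < s <= / (1 + nu * h)) by (split; [apply exp_pos|apply exp_decay_le; auto]).
  pose proof (forcing_weight_bounds nu h (ksq k) Hn Hh Hq) as Ha. fold a in Ha.
  pose proof (Cnorm2_nonneg v). pose proof (Cnorm2_nonneg (g k)).
  apply Rplus_le_compat.
  - assert (s ^ 2 <= (/ (1 + nu * h)) ^ 2) by (apply pow_incr; lra).
    replace (/ (1 + nu * h) * Cnorm2 v) with ((1 + nu * h) * (/ (1 + nu * h)) ^ 2 * Cnorm2 v)
      by (field; lra).
    rewrite <- Rmult_assoc. apply Rmult_le_compat_r; auto. apply Rmult_le_compat_l; lra.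
  - replace (h ^ 2 + h / nu) with ((1 + / (nu * h)) * h ^ 2) by (field; lra).
    rewrite <- Rmult_assoc. apply Rmult_le_compat_r; auto.
    apply Rmult_le_compat_l; [|apply pow_incr; lra].
    assert (0 < / (nu * h)) by (apply Rinv_0_lt_compat; auto). lra.
Qed.

(* The advection term drops out of the energy balance by [advect_orthogonal]. *)
Lemma energy_Sstep_le nu h K lamM f w :
  0 < nu -> 0 < h -> force_ok K lamM f -> real_sfield K w ->
  energy K (Sstep nu h K (curl f) w) <=
  / (1 + nu * h) * (energy K w + h ^ 2 * energy K (advect K w))
  + (h ^ 2 + h / nu) * (lamM * force_energy K f).
Proof.
  intros Hn Hh Hf Hw. unfold energy, force_energy.
  eapply Rle_trans.
  { apply Rsum_le. intros k Hk. apply (Cnorm2_Sstep_le nu h K (curl f) w k Hn Hh Hk). }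
  assert (Hh2 : 0 <= h ^ 2 + h / nu).
  { assert (0 < h / nu) by (unfold Rdiv; apply Rmult_lt_0_compat; auto; apply Rinv_0_lt_compat; auto).
    pose proof (pow2_ge_0 h). lra. }
  eapply Rle_trans.
  { apply Rsum_le. intros k Hk. apply Rplus_le_compat_l.
    apply Rmult_le_compat_l; [exact Hh2|]. apply (Cnorm2_curl_le K lamM f k Hf Hk). }
  rewrite Rsum_plus, !Rsum_scal.
  apply Req_le. f_equal. f_equal.
  rewrite (Rsum_ext_in _ _ _ (fun k _ => Cnorm2_sub_scale (w k) (advect K w k) h)).
  unfold Rminus. rewrite !Rsum_plus, Rsum_opp, !Rsum_scal, (advect_orthogonal K w Hw). ring.
Qed.

Definition symbol_bound (K : nat) : R := IZR (2 * Z.of_nat K * Z.of_nat K).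

Lemma advect_symbol_bound K j l : In j (idx K) -> In l (idx K) ->
  Rabs (advect_symbol j l) <= symbol_bound K.
Proof.
  intros Hj Hl. pose proof (ksq_ge_1 K j Hj) as Hq.
  apply In_idx in Hj; apply In_idx in Hl.
  unfold advect_symbol, Rdiv. rewrite Rabs_mult, Rabs_inv, (Rabs_pos_eq (ksq j)) by lra.
  replace (IZR (fst j) * IZR (snd l) - IZR (snd j) * IZR (fst l))
    with (IZR (fst j * snd l - snd j * fst l)) by (rewrite minus_IZR, !mult_IZR; ring).
  rewrite Rabs_Zabs.
  assert (HZ : (Z.abs (fst j * snd l - snd j * fst l) <= 2 * Z.of_nat K * Z.of_nat K)%Z).
  { destruct Hj as (H1 & H2 & _), Hl as (H3 & H4 & _). apply Z.abs_le. split; nia. }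
  apply IZR_le in HZ. unfold symbol_bound.
  assert (0 < / ksq j <= 1).
  { split; [apply Rinv_0_lt_compat; lra|]. rewrite <- Rinv_1. apply Rinv_le_contravar; lra. }
  assert (0 <= IZR (Z.abs (fst j * snd l - snd j * fst l))) by (apply IZR_le; lia).
  nra.
Qed.

Lemma conv_ind_bounds j l k : 0 <= conv_ind j l k <= 1.
Proof. unfold conv_ind. destruct andb; lra. Qed.

Lemma Rsum2_abs_le l (F : wv -> wv -> R) c :
  (forall x y, In x l -> In y l -> Rabs (F x y) <= c) ->
  Rabs (Rsum l (fun x => Rsum l (fun y => F x y))) <= INR (length l) ^ 2 * c.
Proof.
  intros H. eapply Rle_trans; [apply Rsum_abs|].
  replace (INR (length l) ^ 2 * c) with (INR (length l) * (INR (length l) * c)) by ring.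
  apply Rsum_le_const. intros x Hx.
  eapply Rle_trans; [apply Rsum_abs|]. apply Rsum_le_const. auto.
Qed.

Lemma Cmul_components_bound a b :
  Rabs (fst (Cmul a b)) <= (Cnorm2 a + Cnorm2 b) / 2 /\
  Rabs (snd (Cmul a b)) <= (Cnorm2 a + Cnorm2 b) / 2.
Proof.
  destruct a as [x y], b as [u v]. unfold Cmul, Cnorm2; simpl.
  split; apply Rabs_le;
    pose proof (pow2_ge_0 (x - u)); pose proof (pow2_ge_0 (x + u));
    pose proof (pow2_ge_0 (y - v)); pose proof (pow2_ge_0 (y + v));
    pose proof (pow2_ge_0 (x - v)); pose proof (pow2_ge_0 (x + v));
    pose proof (pow2_ge_0 (y - u)); pose proof (pow2_ge_0 (y + u)); split; nra.
Qed.

Lemma advect_sum_bound K w k (X : wv -> wv -> R) :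
  (forall j l, In j (idx K) -> In l (idx K) -> Rabs (X j l) <= energy K w) ->
  Rabs (Rsum (idx K) (fun j => Rsum (idx K) (fun l => conv_ind j l k * advect_symbol j l * X j l)))
  <= INR (length (idx K)) ^ 2 * (symbol_bound K * energy K w).
Proof.
  intros HX. apply Rsum2_abs_le. intros j l Hj Hl.
  pose proof (conv_ind_bounds j l k). pose proof (advect_symbol_bound K j l Hj Hl).
  rewrite !Rabs_mult, (Rabs_pos_eq (conv_ind j l k)) by lra.
  pose proof (HX j l Hj Hl). pose proof (Rabs_pos (advect_symbol j l)). pose proof (Rabs_pos (X j l)).
  assert (Rabs (advect_symbol j l) * Rabs (X j l) <= symbol_bound K * energy K w)
    by (apply Rmult_le_compat; auto).
  assert (0 <= Rabs (advect_symbol j l) * Rabs (X j l)) by (apply Rmult_le_pos; auto).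
  nra.
Qed.

Lemma Cnorm2_le_components z c : Rabs (fst z) <= c -> Rabs (snd z) <= c -> Cnorm2 z <= 2 * c ^ 2.
Proof.
  intros H1 H2. unfold Cnorm2. rewrite <- (pow2_abs (fst z)), <- (pow2_abs (snd z)).
  assert (Rabs (fst z) ^ 2 <= c ^ 2) by (apply pow_incr; split; [apply Rabs_pos|auto]).
  assert (Rabs (snd z) ^ 2 <= c ^ 2) by (apply pow_incr; split; [apply Rabs_pos|auto]).
  lra.
Qed.

Definition advect_const (K : nat) : R :=
  2 * INR (length (idx K)) * (INR (length (idx K)) ^ 2 * symbol_bound K) ^ 2.

Lemma advect_const_nonneg K : 0 <= advect_const K.
Proof.
  unfold advect_const. apply Rmult_le_pos; [|apply pow2_ge_0].
  pose proof (pos_INR (length (idx K))). lra.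
Qed.

Lemma energy_advect_le K w : energy K (advect K w) <= advect_const K * energy K w ^ 2.
Proof.
  assert (HX : forall j l, In j (idx K) -> In l (idx K) ->
    Rabs (fst (Cmul (w j) (w l))) <= energy K w /\ Rabs (snd (Cmul (w j) (w l))) <= energy K w).
  { intros j l Hj Hl. pose proof (Cnorm2_le_energy K w j Hj). pose proof (Cnorm2_le_energy K w l Hl).
    destruct (Cmul_components_bound (w j) (w l)). lra. }
  unfold energy at 1. eapply Rle_trans; [apply Rsum_le_const|]; [intros k _|right].
  - rewrite advect_components.
    apply Cnorm2_le_components; apply advect_sum_bound; apply HX.
  - unfold advect_const. ring.
Qed.

Section AbsorbingBall.

Variables (X : Type) (S : X -> X) (E : X -> R) (P : X -> Prop) (rho F R0 : R).
Hypothesis rho_bounds : 0 <= rho < 1.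
Hypothesis F_lt_R0 : F < R0.
Hypothesis step_contracts : forall x, P x -> E x <= R0 ->
  P (S x) /\ E (S x) <= rho * E x + (1 - rho) * F.

Lemma iter_energy_le x : P x -> E x <= R0 ->
  forall n, P (Nat.iter n S x) /\ E (Nat.iter n S x) <= F + rho ^ n * (R0 - F).
Proof.
  intros Px Ex. induction n as [|n [Pn En]]; simpl; [split; auto; lra|].
  assert (Hpow : 0 <= rho ^ n <= 1).
  { split; [apply pow_le; lra|]. rewrite <- (pow1 n). apply pow_incr; lra. }
  assert (rho ^ n * (R0 - F) <= R0 - F) by nra.
  destruct (step_contracts _ Pn ltac:(lra)) as [Pn1 En1]. split; [exact Pn1|].
  assert (rho * E (Nat.iter n S x) <= rho * (F + rho ^ n * (R0 - F)))
    by (apply Rmult_le_compat_l; lra).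
  lra.
Qed.

Lemma iter_energy_eventually_lt T : F < T ->
  exists N, forall x, P x -> E x <= R0 -> forall n, (N <= n)%nat -> E (Nat.iter n S x) < T.
Proof.
  intros HT.
  destruct (pow_lt_1_zero rho ltac:(rewrite Rabs_pos_eq; lra) ((T - F) / (R0 - F)))
    as [N HN]; [apply Rdiv_lt_0_compat; lra|].
  exists N. intros x Px Ex n Hn.
  destruct (iter_energy_le x Px Ex n) as [_ En].
  specialize (HN n Hn). rewrite Rabs_pos_eq in HN by (apply pow_le; lra).
  apply (Rmult_lt_compat_r (R0 - F)) in HN; [|lra].
  unfold Rdiv in HN. rewrite Rmult_assoc, Rinv_l, Rmult_1_r in HN by lra.
  lra.
Qed.

End AbsorbingBall.

Lemma force_energy_nonneg K f : 0 <= force_energy K f.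
Proof.
  apply Rsum_nonneg. intros k _.
  pose proof (Cnorm2_nonneg (fst (f k))). pose proof (Cnorm2_nonneg (snd (f k))). lra.
Qed.

Lemma force_energy_pos K lamM f : force_ok K lamM f -> (exists k, f k <> (C0, C0)) ->
  0 < force_energy K f.
Proof.
  intros (_ & _ & _ & Hsupp) [k Hk].
  assert (Hin : In k (idx K)).
  { destruct (in_dec (fun x y : wv => ltac:(decide equality; apply Z.eq_dec)) k (idx K)); auto.
    exfalso. apply Hk, Hsupp. tauto. }
  assert (Hpos : 0 < Cnorm2 (fst (f k)) + Cnorm2 (snd (f k))).
  { destruct (f k) as [[a b] [c d]]. unfold Cnorm2; simpl.
    destruct (Rlt_dec 0 (a ^ 2 + b ^ 2 + (c ^ 2 + d ^ 2))) as [|Hn]; auto. exfalso. apply Hk.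
    pose proof (pow2_ge_0 a); pose proof (pow2_ge_0 b); pose proof (pow2_ge_0 c); pose proof (pow2_ge_0 d).
    assert (a = 0) by nra. assert (b = 0) by nra. assert (c = 0) by nra. assert (d = 0) by nra.
    subst. reflexivity. }
  eapply Rlt_le_trans; [exact Hpos|].
  apply (Rsum_term_le (idx K) (fun k => Cnorm2 (fst (f k)) + Cnorm2 (snd (f k)))); auto.
  intros y _. pose proof (Cnorm2_nonneg (fst (f y))); pose proof (Cnorm2_nonneg (snd (f y))). lra.
Qed.

Lemma Sstep_contracts nu h K lamM f R0 w :
  0 < nu -> 0 < h -> h <= / nu -> h * (advect_const K * R0 + nu ^ 2) <= 3 * nu / 4 ->
  0 <= lamM -> force_ok K lamM f -> real_sfield K w -> energy K w <= R0 ->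
  energy K (Sstep nu h K (curl f) w)
  <= (1 - nu * h / 4) * energy K w + nu * h / 4 * (8 * lamM * force_energy K f / nu ^ 2).
Proof.
  intros Hn Hh Hh1 Hh2 HlamM Hf Hw HwR.
  eapply Rle_trans; [apply (energy_Sstep_le nu h K lamM f w); auto|].
  set (W := energy K w) in *. set (Cc := advect_const K) in *.
  assert (HW : 0 <= W) by apply energy_nonneg.
  assert (HCc : 0 <= Cc) by apply advect_const_nonneg.
  assert (Hnh : 0 < nu * h) by (apply Rmult_lt_0_compat; lra).
  assert (Hnh1 : nu * h <= 1) by (apply (Rmult_le_compat_l nu) in Hh1; [|lra]; rewrite Rinv_r in Hh1; lra).
  assert (Hadv : h ^ 2 * energy K (advect K w) <= h ^ 2 * (Cc * R0) * W).
  { rewrite Rmult_assoc. apply Rmult_le_compat_l; [apply pow2_ge_0|].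
    eapply Rle_trans; [apply energy_advect_le|]. fold W Cc.
    replace (Cc * W ^ 2) with (Cc * W * W) by ring.
    apply Rmult_le_compat_r; [auto|]. apply Rmult_le_compat_l; lra. }
  assert (Hdiss : / (1 + nu * h) * (W + h ^ 2 * energy K (advect K w)) <= (1 - nu * h / 4) * W).
  { apply (Rmult_le_reg_l (1 + nu * h)); [lra|].
    rewrite <- Rmult_assoc, Rinv_r, Rmult_1_l by lra.
    assert (Hsmall : h ^ 2 * (Cc * R0) <= 3 * nu * h / 4 - (nu * h) ^ 2 / 4).
    { assert (h * (h * (Cc * R0 + nu ^ 2)) <= h * (3 * nu / 4)) by (apply Rmult_le_compat_l; lra).
      nra. }
    assert (h ^ 2 * (Cc * R0) * W <= (3 * nu * h / 4 - (nu * h) ^ 2 / 4) * W)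
      by (apply Rmult_le_compat_r; lra).
    replace ((1 + nu * h) * ((1 - nu * h / 4) * W))
      with (W + (3 * nu * h / 4 - (nu * h) ^ 2 / 4) * W) by field.
    lra. }
  assert (Hforce : (h ^ 2 + h / nu) * (lamM * force_energy K f)
                   <= nu * h / 4 * (8 * lamM * force_energy K f / nu ^ 2)).
  { replace (nu * h / 4 * (8 * lamM * force_energy K f / nu ^ 2))
      with ((h / nu + h / nu) * (lamM * force_energy K f)) by (field; lra).
    apply Rmult_le_compat_r.
    - apply Rmult_le_pos; [lra|apply force_energy_nonneg].
    - assert (h * h <= h * / nu) by (apply Rmult_le_compat_l; lra). unfold Rdiv. nra. }
  lra.
Qed.

Lemma energy_lt_of_snorm_lt K w L : snorm K w < L -> energy K w < L ^ 2 / (4 * PI ^ 2).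
Proof.
  intros HL. unfold snorm in HL. fold (energy K w) in HL.
  assert (HPI : 0 < 4 * PI ^ 2) by (pose proof PI_RGT_0; nra).
  assert (0 <= L) by (pose proof (sqrt_pos (4 * PI ^ 2 * energy K w)); lra).
  rewrite <- (sqrt_pow2 L) in HL by lra. apply sqrt_lt_0_alt in HL.
  apply (Rmult_lt_reg_l (4 * PI ^ 2)); [lra|].
  replace (4 * PI ^ 2 * (L ^ 2 / (4 * PI ^ 2))) with (L ^ 2) by (field; pose proof PI_RGT_0; lra).
  exact HL.
Qed.

Lemma snorm_lt_of_energy_lt K w f c0 nu : 0 < c0 -> 0 < nu ->
  energy K w < (c0 / nu) ^ 2 * force_energy K f -> snorm K w < c0 * vnorm K f / nu.
Proof.
  intros Hc0 Hn HE. unfold snorm, vnorm. fold (energy K w) (force_energy K f).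
  assert (HPI : 0 < 4 * PI ^ 2) by (pose proof PI_RGT_0; nra).
  replace (c0 * sqrt (4 * PI ^ 2 * force_energy K f) / nu)
    with (sqrt ((c0 / nu) ^ 2 * (4 * PI ^ 2 * force_energy K f))).
  - apply sqrt_lt_1_alt. split.
    + apply Rmult_le_pos; [lra|apply energy_nonneg].
    + nra.
  - assert (0 <= c0 / nu) by (left; apply Rdiv_lt_0_compat; lra).
    rewrite sqrt_mult_alt, sqrt_pow2 by (auto; apply pow2_ge_0).
    unfold Rdiv; ring.
Qed.

Lemma Sstep_iter_energy_eventually_lt nu h K lamM f R0 T :
  0 < nu -> 0 < h -> h <= / nu -> h * (advect_const K * R0 + nu ^ 2) <= 3 * nu / 4 ->
  0 <= lamM -> force_ok K lamM f ->
  8 * lamM * force_energy K f / nu ^ 2 < R0 -> 8 * lamM * force_energy K f / nu ^ 2 < T ->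
  exists N, forall w, real_sfield K w -> energy K w <= R0 ->
    forall n, (N <= n)%nat -> energy K (Nat.iter n (Sstep nu h K (curl f)) w) < T.
Proof.
  intros Hn Hh Hh1 Hh2 HlamM Hf HR0 HT.
  assert (Hnh : 0 < nu * h <= 1).
  { split; [nra|]. apply (Rmult_le_compat_l nu) in Hh1; [|lra]. rewrite Rinv_r in Hh1; lra. }
  apply (iter_energy_eventually_lt _ _ _ _ (1 - nu * h / 4) (8 * lamM * force_energy K f / nu ^ 2) R0);
    auto; [lra|].
  intros w Hw HwR. split; [now apply (Sstep_real nu h K lamM f)|].
  replace (1 - (1 - nu * h / 4)) with (nu * h / 4) by ring.
  now apply (Sstep_contracts nu h K lamM f R0).
Qed.

Lemma small_step_sizes nu D : 0 < nu -> 0 < D ->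
  exists h0, 0 < h0 /\ forall h, 0 < h <= h0 -> h <= / nu /\ h * D <= 3 * nu / 4.
Proof.
  intros Hn HD. exists (Rmin (/ nu) (3 * nu / (4 * D))). split.
  - apply Rmin_glb_lt; [apply Rinv_0_lt_compat|apply Rdiv_lt_0_compat]; lra.
  - intros h [Hh Hh0]. split; [eapply Rle_trans; [exact Hh0|apply Rmin_l]|].
    apply (Rmult_le_compat_r D) in Hh0; [|lra]. eapply Rle_trans; [exact Hh0|].
    eapply Rle_trans; [apply Rmult_le_compat_r; [lra|apply Rmin_r]|]. right; field; lra.
Qed.

Theorem lemma1 :
  forall (nu : R) (K : nat) (lamM : R) (f : vfield) (c0 : R),
    0 < nu -> 1 <= lamM ->
    force_ok K lamM f ->
    (exists k, f k <> (C0, C0)) ->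
    c0 > 6 * lamM / lambda0 ->
    forall L : R, 0 < L ->
      exists h0 : R, 0 < h0 /\
        forall h : R, 0 < h <= h0 ->
          exists N : nat,
            forall w0 : sfield,
              real_sfield K w0 -> snorm K w0 < L ->
              forall n : nat, (N <= n)%nat ->
                snorm K (Nat.iter n (Sstep nu h K (curl f)) w0)
                  < c0 * vnorm K f / (nu * sqrt lambda0).
Proof.
  intros nu K lamM f c0 Hnu HlamM Hf Hf0 Hc0 L HL.
  unfold lambda0 in *. rewrite sqrt_1, Rmult_1_r. rewrite Rdiv_1_r in Hc0.
  pose proof (force_energy_pos K lamM f Hf Hf0) as HEf.
  set (F := 8 * lamM * force_energy K f / nu ^ 2).
  set (T := (c0 / nu) ^ 2 * force_energy K f).
  assert (HF0 : 0 <= F) by (apply Rmult_le_pos; [nra|left; apply Rinv_0_lt_compat; nra]).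
  assert (HFT : F < T).
  { unfold F, T. replace ((c0 / nu) ^ 2 * force_energy K f)
      with (c0 ^ 2 * force_energy K f / nu ^ 2) by (field; lra).
    assert (8 * lamM < c0 ^ 2) by nra.
    unfold Rdiv. apply Rmult_lt_compat_r; [apply Rinv_0_lt_compat; nra|nra]. }
  set (R0 := L ^ 2 / (4 * PI ^ 2) + T).
  assert (HL2 : 0 < L ^ 2 / (4 * PI ^ 2))
    by (apply Rdiv_lt_0_compat; [nra|pose proof PI_RGT_0; nra]).
  pose proof (advect_const_nonneg K).
  destruct (small_step_sizes nu (advect_const K * R0 + nu ^ 2)) as [h0 [Hh0 Hsmall]];
    [lra|unfold R0; nra|].
  exists h0. split; [exact Hh0|]. intros h Hh. destruct (Hsmall h Hh) as [Hh1 Hh2].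
  destruct (Sstep_iter_energy_eventually_lt nu h K lamM f R0 T) as [N HN];
    try assumption; fold F; try (unfold R0; lra).
  exists N. intros w0 Hw0 HwL n Hn.
  apply snorm_lt_of_energy_lt; [lra|lra|]. apply HN; auto.
  pose proof (energy_lt_of_snorm_lt K w0 L HwL). unfold R0; lra.
Qed.
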